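(* For $\alpha\in\mathbb{R}\setminus\{0\}$ consider the two-stage explicit Runge--Kutta method with $$A=\begin{pmatrix}0&0\\ \alpha&0\end{pmatrix},\qquad b^\top=\Big(1-\tfrac{1}{2\alpha},\ \tfrac{1}{2\alpha}\Big).$$ Its positivity step-size coefficient is $$\gamma_\alpha=\begin{cases}0,&0\ne\alpha<\tfrac12,\\ 1,&\tfrac12\le\alpha\le1,\\ \tfrac1\alpha,&\alpha>1.\end{cases}$$
   Context: For this method, the positivity polynomials (in the variables $\xi^1_{k-1},\xi^1_k,\xi^2_k$) are $P_0=1-(1-\frac1{2\alpha})\xi^1_k-\frac1{2\alpha}\xi^2_k+\frac12\xi^1_k\xi^2_k$, $P_1=(1-\frac1{2\alpha})\xi^1_k+\frac1{2\alpha}\xi^2_k-\frac12\xi^1_{k-1}\xi^2_k-\frac12\xi^1_k\xi^2_k$, $P_2=\frac12\xi^1_{k-1}\xi^2_k$. These arise as follows: applying the method to $u_k'=q_k(u,t)(u_{k-1}-u_k)/\Delta x$ gives $y^1=u^n$, $y^2_k=u^n_k+\alpha\xi^1_k(y^1_{k-1}-y^1_k)$, $u^{n+1}_k=u^n_k+b_1\xi^1_k(y^1_{k-1}-y^1_k)+b_2\xi^2_k(y^2_{k-1}-y^2_k)$ with $\xi^j_k=\frac{\Delta t}{\Delta x}q_k(y^j,t_n+c_j\Delta t)$, and $u^{n+1}_k=P_0u^n_k+P_1u^n_{k-1}+P_2u^n_{k-2}$. The step-size coefficient is $\gamma_\alpha=\sup\{\delta\ge0:P_0,P_1,P_2\ge0\text{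 on }[0,\delta]^3\}$ (or $0$ if the set is empty). *)

From Stdlib Require Import Reals.
From Coquelicot Require Import Coquelicot.
Open Scope R_scope.

(* Positivity polynomials; variables: xm = xi^1_{k-1}, x1 = xi^1_k, x2 = xi^2_k. *)
Definition P0 (alpha xm x1 x2 : R) : R :=
  1 - (1 - 1 / (2 * alpha)) * x1 - 1 / (2 * alpha) * x2 + 1 / 2 * x1 * x2.
Definition P1 (alpha xm x1 x2 : R) : R :=
  (1 - 1 / (2 * alpha)) * x1 + 1 / (2 * alpha) * x2
  - 1 / 2 * xm * x2 - 1 / 2 * x1 * x2.
Definition P2 (alpha xm x1 x2 : R) : R := 1 / 2 * xm * x2.

Definition admissible (alpha delta : R) : Prop :=
  0 <= delta /\
  forall xm x1 x2 : R,
    0 <= xm <= delta -> 0 <= x1 <= delta -> 0 <= x2 <= delta ->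
    0 <= P0 alpha xm x1 x2 /\ 0 <= P1 alpha xm x1 x2 /\ 0 <= P2 alpha xm x1 x2.

(* Step-size coefficient: supremum in the extended reals (Lub_Rbar gives
   p_infty if unbounded, m_infty if empty; the paper's "0 if empty"
   convention is moot since delta = 0 is always admissible). *)
Definition gamma (alpha : R) : Rbar := Lub_Rbar (admissible alpha).

(** With [b = 1/(2 alpha)], both [P0] and [P1] are affine in each of [x1], [x2]
    once [xm] is fixed, and [P1] decreases in [xm]; so positivity on the cube
    [[0,d]^3] only has to be checked at the corners with [xm = d].  These
    corner conditions reduce to [d <= 1], [d <= 2 b = 1/alpha] and [b <= 1],
    i.e. [alpha >= 1/2]: the admissible [d > 0] form the interval
    [(0, min 1 (1/alpha)]], empty when [alpha < 1/2]. *)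

From Stdlib Require Import Reals Lra Psatz.
From Coquelicot Require Import Coquelicot.
Open Scope R_scope.

Lemma bilinear_nonneg_of_corners (d x y c0 c1 c2 c3 : R) :
  0 < d -> 0 <= x <= d -> 0 <= y <= d ->
  0 <= c0 -> 0 <= c0 + c1 * d -> 0 <= c0 + c2 * d ->
  0 <= c0 + c1 * d + c2 * d + c3 * d * d ->
  0 <= c0 + c1 * x + c2 * y + c3 * x * y.
Proof.
  intros Hd Hx Hy H00 Hd0 H0d Hdd.
  (* bilinear interpolation between the four corner values *)
  assert (E : d * d * (c0 + c1 * x + c2 * y + c3 * x * y) =
    c0 * ((d - x) * (d - y)) + (c0 + c1 * d) * (x * (d - y))
    + (c0 + c2 * d) * ((d - x) * y)
    + (c0 + c1 * d + c2 * d + c3 * d * d) * (x * y)) by ring.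
  apply (Rmult_le_reg_l (d * d)); [nra|].
  rewrite Rmult_0_r, E.
  repeat apply Rplus_le_le_0_compat; apply Rmult_le_pos; nra.
Qed.

Lemma admissible_0 (alpha : R) : admissible alpha 0.
Proof.
  split; [lra|]. intros xm x1 x2 Hm H1 H2.
  replace xm with 0 by lra; replace x1 with 0 by lra; replace x2 with 0 by lra.
  unfold P0, P1, P2. lra.
Qed.

Section Admissible.

Variable alpha : R.
Local Notation b := (1 / (2 * alpha)).

Lemma admissible_of_bounds (d : R) :
  0 < d -> d <= 1 -> d <= 2 * b -> b <= 1 -> admissible alpha d.
Proof.
  intros Hd Hd1 Hdb Hb. split; [lra|].
  intros xm x1 x2 Hm H1 H2. unfold P0, P1, P2.
  split; [|split].
  - replace (1 - (1 - b) * x1 - b * x2 + 1 / 2 * x1 * x2) with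
      (1 + - (1 - b) * x1 + - b * x2 + 1 / 2 * x1 * x2) by ring.
    apply (bilinear_nonneg_of_corners d); nra.
  - assert (P1_at_xm_d : 0 <= 0 + (1 - b) * x1 + (b - d / 2) * x2 + -1 / 2 * x1 * x2)
      by (apply (bilinear_nonneg_of_corners d); nra).
    assert (0 <= (d - xm) * x2) by (apply Rmult_le_pos; lra).
    nra.
  - assert (0 <= xm * x2) by (apply Rmult_le_pos; lra). lra.
Qed.

Lemma admissible_bounds (d : R) :
  admissible alpha d -> 0 < d -> d <= 1 /\ d <= 2 * b /\ b <= 1.
Proof.
  intros [_ Hadm] Hd.
  destruct (Hadm d d d) as [_ [Hddd _]]; try lra.
  destruct (Hadm d 0 d) as [_ [Hd0d _]]; try lra.
  destruct (Hadm 0 d 0) as [_ [H0d0 _]]; try lra.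
  unfold P1 in *. nra.
Qed.

Hypothesis alpha_neq0 : alpha <> 0.

Lemma admissible_pos_iff (d : R) :
  0 < d -> admissible alpha d <-> d <= 1 /\ d <= 1 / alpha /\ 1 / 2 <= alpha.
Proof.
  intros Hd.
  assert (E : 2 * b = 1 / alpha) by (field; lra).
  split.
  - intros Hadm. destruct (admissible_bounds d Hadm Hd) as [Hd1 [Hdb Hb]].
    rewrite E in Hdb.
    assert (alpha > 0).
    { destruct (Rlt_or_le 0 alpha) as [|Hneg]; [lra|].
      assert (1 / alpha < 0); [|lra].
      unfold Rdiv. rewrite Rmult_1_l. apply Rinv_lt_0_compat. lra. }
    assert (b * (2 * alpha) = 1) by (field; lra).
    repeat split; nra.
  - intros [Hd1 [Hda Ha]]. apply admissible_of_bounds; [lra|lra|lra|].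
    assert (b * (2 * alpha) = 1) by (field; lra). nra.
Qed.

End Admissible.

Lemma gamma_eq_max (alpha s : R) :
  admissible alpha s -> (forall d, 0 < d -> admissible alpha d -> d <= s) ->
  gamma alpha = Finite s.
Proof.
  intros Hs Hub. unfold gamma. apply is_lub_Rbar_unique. split.
  - intros d Hd.
    destruct (Rle_lt_or_eq_dec 0 d (proj1 Hd)) as [Hpos|<-].
    + now apply Hub.
    + exact (proj1 Hs).
  - intros m Hm. now apply Hm.
Qed.

Theorem proposition2 (alpha : R) (Hne : alpha <> 0) :
  (alpha < 1 / 2 -> gamma alpha = Finite 0) /\
  (1 / 2 <= alpha <= 1 -> gamma alpha = Finite 1) /\
  (1 < alpha -> gamma alpha = Finite (1 / alpha)).
Proof.
  pose proof (admissible_pos_iff alpha Hne) as Hiff.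
  split; [|split]; intros Ha.
  - apply gamma_eq_max; [apply admissible_0|].
    intros d Hd Hadm. apply Hiff in Hadm; lra.
  - assert (1 <= 1 / alpha).
    { apply (Rmult_le_reg_l alpha); [lra|]. field_simplify; lra. }
    apply gamma_eq_max; [apply Hiff; lra|].
    intros d Hd Hadm. apply Hiff in Hadm; lra.
  - assert (0 < 1 / alpha < 1).
    { split; [apply Rdiv_lt_0_compat; lra|].
      apply (Rmult_lt_reg_l alpha); [lra|]. field_simplify; lra. }
    apply gamma_eq_max; [apply Hiff; lra|].
    intros d Hd Hadm. apply Hiff in Hadm; lra.
Qed.
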